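(* Let $n \ge 1$ and $k \in \{1, \ldots, n\}$. Let red tanks $R_1, \ldots, R_n$ each initially contain $1$ unit of water and blue tanks $B_1, \ldots, B_n$ each initially contain $0$. Run the moving window strategy: for $i = 1, \ldots, n-k+1$ (in order), for $j = i, \ldots, i+k-1$ (in order), equilibrate $R_i$ and $B_j$. Then for each $i \in \{1, \ldots, n-k+1\}$ and $j \in \{i, \ldots, i+k-1\}$, immediately after the equilibration of $R_i$ and $B_j$, both $R_i$ and $B_j$ contain at most \[ \frac{k + i - j}{k+1} \] units of water.
   Context: Equilibrating two tanks $a \neq b$ with water levels $x_a, x_b$ replaces both levels by $\frac{x_a+x_b}{2}$ and leaves all other tanks unchanged. *)

From HB Require Import structures.
From mathcomp Require Import all_boot all_order all_algebra.
Set Implicit Arguments. Unset Strict Implicit. Unset Printing Implicit Defensive.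
Import Order.TTheory GRing.Theory Num.Theory.
Local Open Scope ring_scope.

Definition tank := (bool * nat)%type.
Definition red (i : nat) : tank := (true, i).
Definition blue (j : nat) : tank := (false, j).

Definition config (R : realFieldType) := tank -> R.

Definition equilibrate (R : realFieldType) (s : config R) (a b : tank) : config R :=
  fun t => if (t == a) || (t == b) then (s a + s b) / 2%:R else s t.

(* Initial configuration: R_1..R_n contain 1, B_1..B_n contain 0
   (tanks outside these ranges are never used; they are set to 0). *)
Definition init_config (R : realFieldType) (n : nat) : config R :=
  fun t => if t.1 && (1 <= t.2 <= n)%N then 1 else 0.

Definition window_steps (n k : nat) : seq (nat * nat) :=
  flatten [seq [seq (i, j) | j <- iota i k] | i <- iota 1 (n - k + 1)].

Definition apply_step (R : realFieldType) (s : config R) (p : nat * nat) : config R :=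
  equilibrate s (red p.1) (blue p.2).

Definition config_after (R : realFieldType) (n k i j : nat) : config R :=
  foldl (@apply_step R) (init_config R n)
        (take (index (i, j) (window_steps n k)).+1 (window_steps n k)).

From HB Require Import structures.
From mathcomp Require Import all_boot all_order all_algebra.
From mathcomp Require Import zify ring lra.
Import Order.TTheory GRing.Theory Num.Theory.
Local Open Scope ring_scope.
Set Implicit Arguments. Unset Strict Implicit.

(* Measure water in units of 1/(k+1).  Before window i the reds R_i, ..., R_n
   are full and B_(i+p) holds at most k-1-p units.  Inside window i, after its
   first m equilibrations, R_i holds at most k+1-m units and B_(i+p) at most
   k-p units for p < m (still k-1-p for p >= m).  The (m+1)-st equilibration
   averages R_i (at most k+1-m) with B_(i+m) (at most k-1-m), so both end with
   at most k-m = k+i-j units; this is exactly the claimed bound, and it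
   re-establishes the invariant. *)

Section Equilibrate.
Variable R : realFieldType.
Implicit Types (s : config R) (a b t : tank).

Lemma equilibrate_l s a b : equilibrate s a b a = (s a + s b) / 2%:R.
Proof. by rewrite /equilibrate eqxx. Qed.

Lemma equilibrate_r s a b : equilibrate s a b b = (s a + s b) / 2%:R.
Proof. by rewrite /equilibrate eqxx orbT. Qed.

Lemma equilibrate_other s a b t :
  t != a -> t != b -> equilibrate s a b t = s t.
Proof. by rewrite /equilibrate => /negbTE -> /negbTE ->. Qed.

End Equilibrate.

Lemma take_index_pivot (T : eqType) (s1 s2 : seq T) (x : T) : x \notin s1 ->
  take (index x (s1 ++ x :: s2)).+1 (s1 ++ x :: s2) = rcons s1 x.
Proof.
by move=> x_s1; rewrite index_pivot // -cat_rcons take_size_cat // size_rcons.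
Qed.

Section MovingWindow.
Variable R : realFieldType.
Variables n k : nat.
Implicit Types (s : config R) (i m p : nat).

Definition lvl (x : nat) : R := x%:R / k.+1%:R.

Lemma lvl_le x y : (x <= y)%N -> lvl x <= lvl y.
Proof. by move=> le_xy; rewrite ler_pM2r ?invr_gt0 ?ltr0n // ler_nat. Qed.

Lemma lvl_avg x y z : (x + y = z.*2)%N -> (lvl x + lvl y) / 2%:R = lvl z.
Proof.
move=> xyz; rewrite /lvl -mulrDl -natrD xyz -muln2 natrM.
by field; rewrite -(natrD _ 1 k) pnatr_eq0.
Qed.

Definition window i : seq (nat * nat) := [seq (i, j) | j <- iota i k].

Lemma window_stepsE : window_steps n k = flatten (map window (iota 1 (n - k + 1))).
Proof. by []. Qed.

Definition blue_bound m p : nat := if (p < m)%N then (k - p)%N else (k.-1 - p)%N.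

Definition before_window i s :=
  (forall i', (i <= i' <= n)%N -> s (red i') = 1) /\
  (forall p, s (blue (i + p)) <= lvl (k.-1 - p)).

Definition within_window i m s :=
  (forall i', (i < i' <= n)%N -> s (red i') = 1) /\
  s (red i) <= lvl (k.+1 - m) /\
  (forall p, s (blue (i + p)) <= lvl (blue_bound m p)).

Lemma before_window_init : before_window 1 (init_config R n).
Proof.
split=> [i' hi'|p]; rewrite /init_config /=; first by case: ifP => //; lia.
by rewrite divr_ge0 ?ler0n.
Qed.

Lemma within_window_start i s :
  (i <= n)%N -> before_window i s -> within_window i 0 s.
Proof.
move=> le_in [full blues]; split; first by move=> i' hi'; apply: full; lia.
split; last by move=> p; rewrite /blue_bound ltn0.
by rewrite full ?leqnn ?le_in // subn0 /lvl divff // pnatr_eq0.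
Qed.

Lemma within_window_end i s : within_window i k s -> before_window i.+1 s.
Proof.
move=> [full [_ blues]]; split; first by move=> i' hi'; apply: full; lia.
move=> p; rewrite addSnnS.
by apply: le_trans (blues p.+1) _; apply: lvl_le; rewrite /blue_bound; case: ifP; lia.
Qed.

Lemma equilibrate_in_window i m s : (m < k)%N -> within_window i m s ->
  (s (red i) + s (blue (i + m))) / 2%:R <= lvl (k - m).
Proof.
move=> lt_mk [_ [red_i blues]].
have blue_m : s (blue (i + m)) <= lvl (k.-1 - m) by have := blues m; rewrite /blue_bound ltnn.
rewrite -(@lvl_avg (k.+1 - m) (k.-1 - m)); last lia.
by rewrite ler_pM2r ?invr_gt0 ?ltr0n // lerD.
Qed.

Lemma within_window_step i m s : (m < k)%N -> within_window i m s ->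
  within_window i m.+1 (apply_step s (i, i + m)%N).
Proof.
move=> lt_mk win; have avg := equilibrate_in_window lt_mk win.
move: win => [full [_ blues]]; rewrite /apply_step /=.
split; last split.
- move=> i' hi'; rewrite equilibrate_other ?full //.
  by apply/eqP => -[]; lia.
- by rewrite equilibrate_l (le_trans avg) //; apply: lvl_le; lia.
- move=> p; have [->|ne_pm] := eqVneq p m.
    by rewrite equilibrate_r (le_trans avg) //; apply: lvl_le; rewrite /blue_bound ltnSn.
  rewrite equilibrate_other //; last by apply/eqP => -[]; lia.
  by apply: le_trans (blues p) _; apply: lvl_le; rewrite /blue_bound; do 2 case: ifP; lia.
Qed.

Lemma within_window_run i m s : (m <= k)%N -> within_window i 0 s ->
  within_window i m (foldl (@apply_step R) s [seq (i, j) | j <- iota i m]).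
Proof.
elim: m => [|m IH] le_mk win //.
rewrite -addn1 iotaD map_cat foldl_cat /= addn1.
by apply: within_window_step; [lia | apply: IH => //; lia].
Qed.

Lemma before_window_prefix t : (t <= n - k)%N ->
  before_window t.+1
    (foldl (@apply_step R) (init_config R n) (flatten (map window (iota 1 t)))).
Proof.
elim: t => [|t IH] le_t; first exact: before_window_init.
have -> : iota 1 t.+1 = iota 1 t ++ [:: t.+1] by rewrite -[t.+1]addn1 iotaD add1n addn1.
rewrite map_cat flatten_cat foldl_cat /= cats0.
apply/within_window_end/within_window_run => //.
by apply: within_window_start; [lia | apply: IH; lia].
Qed.

Lemma window_steps_pivot i m : (1 <= i <= n - k + 1)%N -> (m < k)%N ->
  exists post, window_steps n k =
    (flatten (map window (iota 1 i.-1)) ++ [seq (i, j) | j <- iota i m]) ++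
    (i, i + m)%N :: post.
Proof.
move=> hi lt_mk; rewrite window_stepsE.
have -> : iota 1 (n - k + 1) = iota 1 i.-1 ++ i :: iota i.+1 (n - k + 1 - i).
  have split_n : (i.-1 + (n - k + 1 - i).+1 = n - k + 1)%N by lia.
  by rewrite -{1}split_n iotaD add1n prednK //; lia.
rewrite map_cat flatten_cat /=.
have -> : window i = [seq (i, j) | j <- iota i m] ++
                     (i, i + m)%N :: [seq (i, j) | j <- iota (i + m)%N.+1 (k - m.+1)].
  have split_k : (m + (k - m.+1).+1 = k)%N by lia.
  by rewrite /window -{1}split_k iotaD map_cat.
by eexists; rewrite -!catA cat_cons.
Qed.

Lemma config_afterE i m : (1 <= i <= n - k + 1)%N -> (m < k)%N ->
  config_after R n k i (i + m)%N =
  apply_step (foldl (@apply_step R)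
                (foldl (@apply_step R) (init_config R n)
                   (flatten (map window (iota 1 i.-1))))
                [seq (i, j) | j <- iota i m]) (i, i + m)%N.
Proof.
move=> hi lt_mk; rewrite /config_after.
have [post ->] := window_steps_pivot hi lt_mk.
rewrite take_index_pivot ?foldl_rcons ?foldl_cat //.
rewrite mem_cat negb_or; apply/andP; split.
  by apply/flatten_mapP => -[i']; rewrite mem_iota => hi' /mapP [j _ [eq_i _]]; lia.
by apply/mapP => -[j]; rewrite mem_iota => hj [eq_j]; lia.
Qed.

End MovingWindow.

Theorem mainTheorem5 (R : realFieldType) (n k : nat)
  (hn : (1 <= n)%N) (hk1 : (1 <= k)%N) (hkn : (k <= n)%N)
  (i j : nat) (hi1 : (1 <= i)%N) (hi2 : (i <= n - k + 1)%N)
  (hj1 : (i <= j)%N) (hj2 : (j <= i + k - 1)%N) :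
  config_after R n k i j (red i) <= ((k + i)%:R - j%:R) / (k.+1)%:R /\
  config_after R n k i j (blue j) <= ((k + i)%:R - j%:R) / (k.+1)%:R.
Proof.
have [m def_j] : exists m, j = (i + m)%N by exists (j - i)%N; lia.
subst j; have lt_mk : (m < k)%N by lia.
have hi : (1 <= i <= n - k + 1)%N by lia.
have -> : ((k + i)%:R - (i + m)%:R : R) = (k - m)%:R by rewrite -natrB; [congr _%:R|]; lia.
have win : within_window n k i m
    (foldl (@apply_step R)
       (foldl (@apply_step R) (init_config R n) (flatten (map (window k) (iota 1 i.-1))))
       [seq (i, j) | j <- iota i m]).
  apply: within_window_run; first lia.
  apply: within_window_start; first lia.
  by rewrite -[i in before_window _ _ i]prednK //; apply: before_window_prefix; lia.
have avg := equilibrate_in_window lt_mk win.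
by rewrite config_afterE // /apply_step /= equilibrate_l equilibrate_r.
Qed.
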